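(* For every $n$, the map of $n$-globular sets $\pi\colon D^s_n\to\mathrm{pd}_n$ is surjective: for every $k\le n$ and every globular $k$-pasting diagram $P$ there is a simple $k$-string diagram $D$ with $\pi(D)=P$.
   Context: Write $\langle\ell\rangle=\{1<\dots<\ell\}$. A $k$-stage level tree with crossings is a diagram $X_k\xrightarrow{v^k}\cdots\xrightarrow{v^2}X_1\xrightarrow{v^1}\langle1\rangle$ of finite totally ordered sets and arbitrary functions; it is a $k$-stage level tree if all $v^i$ are order preserving. A simple $k$-string diagram is a $k$-stage level tree with crossings with $X_i=\langle\ell_i\rangle$ for all $i$; a globular $k$-pasting diagram is a $k$-stage level tree with $X_i=\langle\ell_i\rangle$. $D^s_n(k)$ and $\mathrm{pd}_n(k)$ ($k\le n$) denote the sets of these, made into $n$-globular sets with source and target both given by truncation. For a $k$-stage level tree with crossings $X$, define $\overline{X}$ as the same diagram of sets with new orders: $\overline{X}_1=X_1$, and $\overline{X}_{i+1}$ has the unique total order making $v^{i+1}\times\mathrm{id}\colon\overline{X}_{i+1}\to\overline{X}_i\times X_{i+1}$ order preserving, where the target has the lexicographic order ($(a,b)\le(a',b')$ iff $a<a'$, or $a=a'$ and $b\le b'$). Then $\overline{X}$ is a $k$-stage level tree. For a simple $k$-string diagram $D$, $\pi(D)$ is the unique globular $k$-pasting diagram isomorphic (via levelwise order-preserving bijections commuting with the maps) to $\overline{D}$. *)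

From mathcomp Require Import all_boot.
Set Implicit Arguments. Unset Strict Implicit. Unset Printing Implicit Defensive.

(* Encoding (0-based).  A k-stage diagram with all X_i = <l_i> is a list
   D = [:: s_1; ...; s_k] of lists of naturals: X_i = {0,...,l_i - 1} with
   l_i = size s_i and its usual order, and v^i : X_i -> X_{i-1} is
   x |-> nth 0 s_i x.  By convention X_0 = <1> = {0}. *)
Definition diagram := seq (seq nat).

Definition lev (D : diagram) (i : nat) : seq nat := nth [::] D i.-1.

Definition vmap (D : diagram) (i x : nat) : nat := nth 0 (lev D i) x.

Definition lens (D : diagram) (i : nat) : nat :=
  if i is 0 then 1 else size (lev D i).

(* k-stage level tree with crossings with X_i = <l_i>: a simple k-string diagram *)
Definition is_string_diagram (k : nat) (D : diagram) : Prop :=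
  size D = k /\
  forall i, 1 <= i <= k -> forall x, x < lens D i -> vmap D i x < lens D i.-1.

Definition is_pasting_diagram (k : nat) (D : diagram) : Prop :=
  is_string_diagram k D /\
  forall i, 1 <= i <= k -> forall x y, x < lens D i -> y < lens D i ->
    x <= y -> vmap D i x <= vmap D i y.

(* The order of \overline{D} at level i: barle D i x y  <->  x <= y in \overline{X}_i.
   \overline{X}_0 = <1>; \overline{X}_{i+1} carries the order pulled back from the
   lexicographic order on \overline{X}_i x X_{i+1} along v^{i+1} x id. *)
Fixpoint barle (D : diagram) (i : nat) : nat -> nat -> bool :=
  match i with
  | 0 => fun x y => x <= y
  | i'.+1 => fun x y =>
      let a := vmap D i'.+1 x in
      let a' := vmap D i'.+1 y in
      (barle D i' a a' && ~~ barle D i' a' a) || ((a == a') && (x <= y))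
  end.

(* "pi D = P": P is a globular k-pasting diagram isomorphic to \overline{D}
   via levelwise order-preserving bijections commuting with the maps. *)
Definition is_pi (k : nat) (D P : diagram) : Prop :=
  is_pasting_diagram k P /\
  exists f : nat -> nat -> nat,
    f 0 0 = 0 /\
    forall i, 1 <= i <= k ->
      (forall x, x < lens D i -> f i x < lens P i) /\
      (forall x y, x < lens D i -> y < lens D i -> f i x = f i y -> x = y) /\
      (forall z, z < lens P i -> exists2 x, x < lens D i & f i x = z) /\
      (forall x y, x < lens D i -> y < lens D i -> barle D i x y -> f i x <= f i y) /\
      (forall x, x < lens D i -> f i.-1 (vmap D i x) = vmap P i (f i x)).

From mathcomp Require Import all_boot.

(* A globular pasting diagram P is itself a simple string diagram, and pi fixes
   it: when every v^i is order preserving, x <= y forces v^i x <= v^i y, so the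
   lexicographic order on \overline{X}_{i-1} x X_i restricted to the graph of
   v^i is just the order of X_i.  Hence \overline{P} = P and the identity maps
   witness pi(P) = P. *)

Lemma pasting_diagram_is_string k (P : diagram) :
  is_pasting_diagram k P -> is_string_diagram k P.
Proof. by case. Qed.

Section PastingDiagramBar.

Variables (k : nat) (P : diagram).
Hypothesis P_pasting : is_pasting_diagram k P.

Lemma barle_pasting i : i <= k ->
  forall x y, x < lens P i -> y < lens P i -> barle P i x y = (x <= y).
Proof.
case: P_pasting => [[_ vmap_lt] vmap_mono].
elim: i => [|i IH] ltik x y ltx lty //=.
have lvl : 1 <= i.+1 <= k by rewrite ltik.
rewrite !IH ?(ltnW ltik) ?(vmap_lt _ lvl) // -ltnNge.
case: (leqP x y) => [lexy | ltyx].
  have levxy := vmap_mono _ lvl _ _ ltx lty lexy.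
  by rewrite levxy andbT /= orbC -leq_eqVlt.
have levyx := vmap_mono _ lvl _ _ lty ltx (ltnW ltyx).
by rewrite andbF orbF ltnNge levyx andbF.
Qed.

Lemma is_pi_self : is_pi k P P.
Proof.
split=> //; exists (fun _ x => x); split=> // i /andP[_ leik].
do 2 split=> //; split; first by move=> z ltz; exists z.
by split=> // x y ltx lty; rewrite barle_pasting.
Qed.

End PastingDiagramBar.

Theorem mainTheorem3 (n : nat) :
  forall k, k <= n ->
  forall P : diagram, is_pasting_diagram k P ->
  exists D : diagram, is_string_diagram k D /\ is_pi k D P.
Proof.
move=> k _ P P_pasting; exists P.
by split; [exact: pasting_diagram_is_string | exact: is_pi_self].
Qed.
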